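(* Let $n,k$ be integers with $1 \leq k \leq n$, let $q$ be a prime power with $q > \binom{n-1}{k-1}$, and let $\mathbf{M}=(m_{i,j})$ be a $k \times n$ binary matrix in which every row has Hamming weight $n-k+1$. Then $\mathbf{M}$ is the support matrix of a generator matrix of some $[n,k]_q$ MDS code if and only if $f(\mathbf{V}_{\mathbf{M}}) \not\equiv 0$ (as a polynomial over $\mathbb{F}_q$).
   Context: For $\mathbf{G}=(g_{i,j}) \in \mathbb{F}_q^{k\times n}$, the support matrix of $\mathbf{G}$ is the $k\times n$ binary matrix with $(i,j)$ entry $0$ if $g_{i,j}=0$ and $1$ if $g_{i,j}\neq 0$. For a $k\times n$ binary matrix $\mathbf{M}=(m_{i,j})$, $\mathbf{V}_{\mathbf{M}}=(v_{i,j})$ is the matrix with $v_{i,j}=0$ if $m_{i,j}=0$ and $v_{i,j}=\xi_{i,j}$ if $m_{i,j}=1$, where the $\xi_{i,j}$ are distinct indeterminates. For any $k\times n$ matrix $\mathbf{N}$, $f(\mathbf{N})=\prod_{\mathbf{P}}\det(\mathbf{P})$, the product over all $\binom{n}{k}$ square submatrices $\mathbf{P}$ of order $k$ of $\mathbf{N}$ (obtained by choosing $k$ of the $n$ columns). An $[n,k]_q$ MDS code is a linear code of length $n$ and dimension $k$ over $\mathbb{F}_q$ with minimum distance $n-k+1$. *)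

From HB Require Import structures.
From mathcomp Require Import all_boot all_order all_algebra all_field.
From mathcomp Require Import mpoly.
Set Implicit Arguments. Unset Strict Implicit. Unset Printing Implicit Defensive.
Import GRing.Theory.
Local Open Scope ring_scope.

Definition hwt (F : fieldType) (n : nat) (c : 'rV[F]_n) : nat :=
  #|[set j : 'I_n | c 0 j != 0]|.

Definition min_dist_is (F : finFieldType) (k n : nat) (G : 'M[F]_(k, n)) (d : nat) : Prop :=
  (exists u : 'rV[F]_k, u *m G != 0 /\ hwt (u *m G) = d) /\
  (forall u : 'rV[F]_k, u *m G != 0 -> (d <= hwt (u *m G))%N).

Definition is_MDS_generator (F : finFieldType) (k n : nat) (G : 'M[F]_(k, n)) : Prop :=
  \rank G = k /\ min_dist_is G (n - k + 1).

Definition support_mx (F : fieldType) (k n : nat) (G : 'M[F]_(k, n)) : 'M[bool]_(k, n) :=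
  \matrix_(i, j) (G i j != 0).

Definition V_mx (F : fieldType) (k n : nat) (M : 'M[bool]_(k, n)) : 'M[{mpoly F[k * n]}]_(k, n) :=
  \matrix_(i, j) (if M i j then 'X_(mxvec_index i j) else 0).

Definition f_minors (R : comRingType) (k n : nat) (N : 'M[R]_(k, n)) : R :=
  \prod_(s : {ffun 'I_k -> 'I_n} | [forall i : 'I_k, forall j : 'I_k, (i < j)%N ==> (s i < s j)%N])
     \det (colsub s N).

(* Evaluating [V_mx M] at the entries of [G] gives back [G] when [M] is the
   support of [G], and all maximal minors of an MDS generator are nonzero; hence
   [f (V_mx M)] does not vanish at that point.
   Conversely, the variable of entry (i, j) occurs in the minor on the columns
   [s] only if [j] is one of these columns, so its degree in [f (V_mx M)] is at
   most C(n-1, k-1) < q.  A nonzero polynomial over F_q with all partial degrees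
   below q has a nonzero value, which yields a specialization [G] of [V_mx M]
   with all maximal minors nonzero.  Every nonzero codeword of [G] then has
   weight at least n-k+1, so each row of [G] fills the support of the
   corresponding row of [M]. *)

From HB Require Import structures.
From mathcomp Require Import all_boot all_algebra.
From mathcomp Require Import mpoly.
From mathcomp Require Import perm zify.
Import GRing.Theory.
Local Open Scope ring_scope.
Set Implicit Arguments. Unset Strict Implicit. Unset Printing Implicit Defensive.

Section PartialCoefficients.
Variables (R : comNzRingType) (m : nat).
Implicit Types (p : {mpoly R[m]}) (mo : 'X_{1..m}) (i : 'I_m).

Definition mnm_clear mo i : 'X_{1..m} :=
  [multinom if j == i then 0%N else mo j | j < m].

(* [p = \sum_d 'X_i ^+ d * mcoeffv p i d], with ['X_i] absent from [mcoeffv p i d]. *)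
Definition mcoeffv p i (d : nat) : {mpoly R[m]} :=
  \sum_(mo <- msupp p | mo i == d) p@_mo *: 'X_[mnm_clear mo i].

Lemma mnm_clear_inj mo mo' i :
  mo' i = mo i -> mnm_clear mo' i = mnm_clear mo i -> mo' = mo.
Proof.
move=> eq_i /mnmP eq_clear; apply/mnmP => j.
have [->//|ji] := eqVneq j i.
by have := eq_clear j; rewrite !mnmE (negPf ji).
Qed.

Lemma prod_mnm_clear mo i (y : 'I_m -> R) :
  \prod_j y j ^+ mo j = y i ^+ mo i * \prod_j y j ^+ mnm_clear mo i j.
Proof.
rewrite (bigD1 i) //= [X in _ = _ * X](bigD1 i) //= mnmE eqxx expr0 mul1r.
by congr (_ * _); apply: eq_bigr => j /negPf ji; rewrite mnmE ji.
Qed.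

Lemma prod_mnm_clear_set mo i (y : 'I_m -> R) t :
  \prod_j (if j == i then t else y j) ^+ mnm_clear mo i j =
  \prod_j y j ^+ mnm_clear mo i j.
Proof. by apply: eq_bigr => j _; rewrite mnmE; case: eqP => // _; rewrite !expr0. Qed.

Lemma meval_mcoeffv p i d (y : 'I_m -> R) :
  (mcoeffv p i d).@[y] =
  \sum_(mo <- msupp p | mo i == d) p@_mo * \prod_j y j ^+ mnm_clear mo i j.
Proof.
rewrite /mcoeffv (big_morph (meval y) (mevalD y) (meval0 y)).
by apply: eq_bigr => mo _; rewrite mevalZ mevalX.
Qed.

Lemma meval_mcoeffv_set p i d (y : 'I_m -> R) t :
  (mcoeffv p i d).@[fun j => if j == i then t else y j] = (mcoeffv p i d).@[y].
Proof. by rewrite !meval_mcoeffv; apply: eq_bigr => mo _; rewrite prod_mnm_clear_set. Qed.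

Lemma meval_mcoeffv_expand p i b (y : 'I_m -> R) :
  (forall mo, mo \in msupp p -> (mo i < b)%N) ->
  p.@[y] = \sum_(d < b) y i ^+ d * (mcoeffv p i d).@[y].
Proof.
move=> lt_b.
under [RHS]eq_bigr => d _ do rewrite meval_mcoeffv big_distrr big_mkcond /=.
rewrite exchange_big /= mevalE big_seq_cond [RHS]big_seq_cond.
apply: eq_bigr => mo /andP [p_mo _].
rewrite (bigD1 (Ordinal (lt_b _ p_mo))) //= eqxx [X in _ + X]big1 ?addr0.
  by rewrite (prod_mnm_clear mo i) mulrCA.
move=> d ne_d; case: eqP => // eq_d; case/eqP: ne_d; exact/val_inj.
Qed.

Lemma mcoeff_mcoeffv p i d mo' :
  (mcoeffv p i d)@_mo' =
  \sum_(mo <- msupp p | mo i == d) p@_mo * (mnm_clear mo i == mo')%:R.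
Proof.
rewrite /mcoeffv (big_morph (mcoeff mo') (mcoeffD mo') (mcoeff0 _ mo')).
by apply: eq_bigr => mo _; rewrite mcoeffZ mcoeffX.
Qed.

Lemma mcoeff_mcoeffv_clear p i mo :
  (mcoeffv p i (mo i))@_(mnm_clear mo i) = p@_mo.
Proof.
rewrite mcoeff_mcoeffv.
have clear_neq mo' : mo' != mo -> mo' i == mo i ->
    (mnm_clear mo' i == mnm_clear mo i) = false.
  move=> /negPf ne /eqP eq_i; apply/negbTE/negP => /eqP eq_clear.
  by rewrite (mnm_clear_inj eq_i eq_clear) eqxx in ne.
have [p_mo|p_mo] := boolP (mo \in msupp p).
  rewrite big_mkcond (bigD1_seq mo) ?msupp_uniq //= !eqxx mulr1 big1 ?addr0 //.
  by move=> mo' ne; case: ifP => // eq_i; rewrite clear_neq // mulr0.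
rewrite big1_seq ?(memN_msupp_eq0 p_mo) // => mo' /andP [eq_i p_mo'].
rewrite clear_neq ?mulr0 //; apply: contraNneq p_mo => <-; exact: p_mo'.
Qed.

Lemma msupp_mcoeffv p i d mo' : mo' \in msupp (mcoeffv p i d) ->
  exists2 mo, mo \in msupp p & mo' = mnm_clear mo i.
Proof.
rewrite mcoeff_msupp mcoeff_mcoeffv => nz.
have [[mo p_mo /eqP <-]|no_mo] := hasP (a := fun mo => mnm_clear mo i == mo') (s := msupp p).
  by exists mo.
case/negP: nz; rewrite big1_seq // => mo /andP [_ p_mo].
case: eqP => [eq_mo|]; last by rewrite mulr0.
by case: no_mo; exists mo => //; rewrite eq_mo.
Qed.

End PartialCoefficients.

Section FiniteFieldVanishing.
Variables (F : finFieldType) (m : nat).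
Local Notation q := #|F|.
Implicit Types (p : {mpoly F[m]}) (mo : 'X_{1..m}).

Lemma poly_vanish_eq0 (P : {poly F}) :
  (size P <= q)%N -> (forall x, root P x) -> P = 0.
Proof.
move=> szP rootP; apply: (roots_geq_poly_eq0 (rs := enum F)); last by rewrite -cardE.
  by apply/allP => x _; apply: rootP.
exact: enum_uniq.
Qed.

Lemma meval_mcoeffv_vanish p i (d : nat) (y : 'I_m -> F) :
  (forall mo, mo \in msupp p -> (mo i < q)%N) -> (forall y, p.@[y] = 0) ->
  (d < q)%N -> (mcoeffv p i d).@[y] = 0.
Proof.
move=> lt_q p0 lt_dq.
pose Q := \poly_(d < q) (mcoeffv p i d).@[y].
have Q0 : Q = 0.
  apply: poly_vanish_eq0; first exact: size_poly.
  move=> t; apply/eqP; rewrite horner_poly.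
  rewrite -[RHS](p0 (fun j => if j == i then t else y j)).
  rewrite (meval_mcoeffv_expand _ lt_q) eqxx.
  by apply: eq_bigr => d' _; rewrite mulrC meval_mcoeffv_set.
by have := congr1 (fun P : {poly F} => P`_d) Q0; rewrite coef_poly lt_dq coef0.
Qed.

Lemma mpoly_vanish_eq0 p :
  (forall mo, mo \in msupp p -> forall j, (mo j < q)%N) ->
  (forall y, p.@[y] = 0) -> p = 0.
Proof.
suff vanish_t t : forall p,
    (forall mo, mo \in msupp p -> forall j, (mo j < q)%N) ->
    (forall mo, mo \in msupp p -> forall j : 'I_m, (t <= j)%N -> mo j = 0%N) ->
    (forall y, p.@[y] = 0) -> p = 0.
  by move=> lt_q p0; apply: (vanish_t m) => // mo _ j; rewrite leqNgt ltn_ord.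
elim: t => [|t IHt] {}p lt_q free_t p0.
  have /msize1_polyC p_const : (msize p <= 1)%N.
    rewrite msizeE; apply/bigmax_leqP_seq => mo p_mo _.
    rewrite ltnS leqn0 mdeg_eq0; apply/eqP/mnmP => j.
    by rewrite mnm0E free_t.
  by have := p0 (fun=> 0); rewrite p_const mevalC => ->; rewrite mpolyC0.
have [le_mt|lt_tm] := leqP m t.
  apply: IHt => // mo _ j le_tj.
  by have := leq_trans le_mt le_tj; rewrite leqNgt ltn_ord.
pose i := Ordinal lt_tm.
have mcoeffv0 (d : 'I_q) : mcoeffv p i d = 0.
  apply: IHt.
  - move=> _ /msupp_mcoeffv [mo p_mo ->] j; rewrite mnmE.
    by case: eqP => _; [exact: leq_ltn_trans (lt_q _ p_mo j)|exact: lt_q].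
  - move=> _ /msupp_mcoeffv [mo p_mo ->] j le_tj; rewrite mnmE.
    case: eqP => // /eqP ne_ji; apply: (free_t _ p_mo).
    rewrite ltn_neqAle le_tj andbT; apply: contra ne_ji => /eqP eq_tj.
    exact/eqP/val_inj.
  - by move=> y; apply: meval_mcoeffv_vanish => // mo p_mo; apply: lt_q.
apply/mpolyP => mo; rewrite mcoeff0.
have [p_mo|/memN_msupp_eq0 //] := boolP (mo \in msupp p).
by rewrite -(mcoeff_mcoeffv_clear p i) (mcoeffv0 (Ordinal (lt_q _ p_mo i))) mcoeff0.
Qed.

Lemma mpoly_nonvanishing p : p != 0 ->
  (forall mo, mo \in msupp p -> forall j, (mo j < q)%N) ->
  exists y : 'I_m -> F, p.@[y] != 0.
Proof.
move=> nz_p lt_q.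
have [/existsP [y p_y] | /existsPn p0] := boolP [exists y : {ffun 'I_m -> F}, p.@[y] != 0].
  by exists y.
case/eqP: nz_p; apply: mpoly_vanish_eq0 => // y.
have /negPn/eqP <- := p0 [ffun j => y j].
by apply: meval_eq => j; rewrite ffunE.
Qed.

End FiniteFieldVanishing.

Section PartialDegree.
Variables (R : nzRingType) (m : nat).
Implicit Types (p : {mpoly R[m]}) (l : 'I_m) (d : nat).

Definition vdeg_le l d p := forall mo, mo \in msupp p -> (mo l <= d)%N.

Lemma vdeg_leW l d d' p : (d <= d')%N -> vdeg_le l d p -> vdeg_le l d' p.
Proof. by move=> le_dd' le_p mo /le_p /leq_trans; apply. Qed.

Lemma vdeg_le0 l d : vdeg_le l d 0.
Proof. by move=> mo; rewrite -mpolyC0 msupp0. Qed.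

Lemma vdeg_le1 l d : vdeg_le l d 1.
Proof. by move=> mo; rewrite -mpolyC1 msupp1 inE => /eqP ->; rewrite mnm0E. Qed.

Lemma vdeg_leX l l' : vdeg_le l (l' == l) 'X_l'.
Proof. by move=> mo; rewrite msuppX inE => /eqP ->; rewrite mnm1E. Qed.

Lemma vdeg_leD l d p1 p2 : vdeg_le l d p1 -> vdeg_le l d p2 -> vdeg_le l d (p1 + p2).
Proof.
by move=> le1 le2 mo /msuppD_le; rewrite mem_cat => /orP [/le1|/le2].
Qed.

Lemma vdeg_leN l d p : vdeg_le l d p -> vdeg_le l d (- p).
Proof. by move=> le_p mo; rewrite (perm_mem (msuppN p)) => /le_p. Qed.

Lemma vdeg_leM l d1 d2 p1 p2 :
  vdeg_le l d1 p1 -> vdeg_le l d2 p2 -> vdeg_le l (d1 + d2) (p1 * p2).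
Proof.
move=> le1 le2 mo /msuppM_le /allpairsP [[m1 m2] /= [m1_p1 m2_p2 ->]].
by rewrite mnmDE leq_add ?le1 ?le2.
Qed.

Lemma vdeg_le_sum l d (I : Type) (r : seq I) (P : pred I) (f : I -> {mpoly R[m]}) :
  (forall i, P i -> vdeg_le l d (f i)) -> vdeg_le l d (\sum_(i <- r | P i) f i).
Proof. by move=> le_f; apply: big_ind => //; [exact: vdeg_le0|exact: vdeg_leD]. Qed.

Lemma vdeg_le_prod l (I : Type) (r : seq I) (P : pred I) (f : I -> {mpoly R[m]}) c :
  (forall i, P i -> vdeg_le l (c i) (f i)) ->
  vdeg_le l (\sum_(i <- r | P i) c i)%N (\prod_(i <- r | P i) f i).
Proof.
move=> le_f; apply: (big_ind2 (fun p d => vdeg_le l d p)) => //.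
  exact: vdeg_le1.
by move=> p1 p2 d1 d2; apply: vdeg_leM.
Qed.

End PartialDegree.

Section IncreasingMaps.
Variables (k n : nat).
Implicit Types (s : {ffun 'I_k -> 'I_n}) (j : 'I_n).

Definition strict_incr s :=
  [forall a : 'I_k, forall b : 'I_k, (a < b)%N ==> (s a < s b)%N].

Lemma strict_incrP s : reflect {homo s : a b / (a < b)%N} (strict_incr s).
Proof.
apply: (iffP forallP) => [incr_s a b lt_ab|homo_s a].
  exact: implyP (forallP (incr_s a) b) lt_ab.
by apply/forallP => b; apply/implyP; apply: homo_s.
Qed.

Lemma strict_incr_inj s : strict_incr s -> injective s.
Proof.
move=> /strict_incrP homo_s a b eq_ab; apply/val_inj/eqP.
by apply: contraT; rewrite neq_ltn => /orP [] /homo_s; rewrite eq_ab ltnn.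
Qed.

Lemma sorted_enum_ord p : sorted (fun a b : 'I_p => (a < b)%N) (enum 'I_p).
Proof. by have := iota_ltn_sorted 0 p; rewrite -val_enum_ord sorted_map. Qed.

Lemma sorted_enum_set (Z : {set 'I_n}) : sorted (fun a b : 'I_n => (a < b)%N) (enum Z).
Proof.
have -> : enum Z = [seq x <- enum 'I_n | x \in Z] by rewrite enumT.
by apply: sorted_filter (sorted_enum_ord n) => a b c; apply: ltn_trans.
Qed.

Lemma strict_incr_codom_inj s1 s2 : strict_incr s1 -> strict_incr s2 ->
  codom s1 =i codom s2 -> s1 = s2.
Proof.
have sorted_codom s : strict_incr s -> sorted (fun a b : 'I_n => (a < b)%N) (codom s).
  by move=> /strict_incrP homo_s; rewrite /codom /image_mem sorted_map;
     apply: sub_sorted (sorted_enum_ord k) => a b /homo_s.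
move=> incr1 incr2 eq_codom.
have : codom s1 = codom s2.
  apply: (irr_sorted_eq (leT := fun a b : 'I_n => (a < b)%N)) eq_codom.
  - by move=> a b c; apply: ltn_trans.
  - by move=> a; apply: ltnn.
  - exact: sorted_codom.
  - exact: sorted_codom.
by move/eq_in_map => eq_s; apply/ffunP => x; apply: eq_s; rewrite mem_enum.
Qed.

Lemma card_strict_incr_hit j :
  (#|[set s | strict_incr s && (j \in codom s)]| <= 'C(n.-1, k.-1))%N.
Proof.
set D := [set s | _].
pose g s := [set x in codom s] :\ j.
have g_inj : {in D &, injective g}.
  move=> s1 s2; rewrite !inE => /andP [incr1 j_s1] /andP [incr2 j_s2] eq_g.
  apply: strict_incr_codom_inj incr1 incr2 _ => x.
  have /setP/(_ x) := congr1 (fun A => j |: A) eq_g.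
  by rewrite !setD1K ?inE // => ->.
rewrite -(card_in_imset g_inj) -[n in 'C(n.-1, _)]card_ord -(cardsC1 j) -cards_draws.
apply: subset_leq_card; apply/subsetP => A /imsetP [s].
rewrite [s \in D]inE => /andP [incr_s j_s] ->; rewrite inE; apply/andP; split.
  by apply/subsetP => x; rewrite !inE => /andP [].
have := cardsD1 j [set x in codom s].
by rewrite inE j_s cardsE card_codom ?card_ord ?add1n => [->|]; last exact: strict_incr_inj.
Qed.

Lemma exists_strict_incr_sub (Z : {set 'I_n}) : (k <= #|Z|)%N ->
  exists2 s, strict_incr s & forall b, s b \in Z.
Proof.
move=> le_kZ; have lt_size (b : 'I_k) : (b < size (enum Z))%N.
  by rewrite -cardE (leq_trans _ le_kZ).
have le_kn : (k <= n)%N by rewrite (leq_trans le_kZ) // (leq_trans (max_card _)) ?card_ord.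
exists [ffun b => nth (widen_ord le_kn b) (enum Z) b].
  apply/strict_incrP => a b lt_ab; rewrite !ffunE.
  rewrite (set_nth_default (widen_ord le_kn a) (widen_ord le_kn b)) //.
  apply: (sorted_ltn_nth (leT := fun a b : 'I_n => (a < b)%N)); rewrite ?inE //.
  - by move=> x y z; apply: ltn_trans.
  - exact: sorted_enum_set.
by move=> b; rewrite ffunE -mem_enum mem_nth.
Qed.

End IncreasingMaps.

Lemma rmorph_f_minors (R S : comNzRingType) (f : {rmorphism R -> S}) k n
    (N : 'M[R]_(k, n)) :
  f (f_minors N) = f_minors (map_mx f N).
Proof.
by rewrite /f_minors rmorph_prod; apply: eq_bigr => s _; rewrite -det_map_mx map_mxsub.
Qed.

Lemma f_minors_neq0P (R : idomainType) k n (N : 'M[R]_(k, n)) :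
  reflect (forall s, strict_incr s -> \det (colsub s N) != 0) (f_minors N != 0).
Proof. exact: prodf_neq0. Qed.

Lemma mxvec_index_inj k n (i i' : 'I_k) (j j' : 'I_n) :
  mxvec_index i j = mxvec_index i' j' -> i = i' /\ j = j'.
Proof.
pose A : 'M[('I_k * 'I_n)%type]_(k, n) := \matrix_(a, b) (a, b).
by move=> eq_ij; have := mxvecE A i j; rewrite eq_ij mxvecE !mxE => [[-> ->]].
Qed.

Section GenericMatrix.
Variables (F : fieldType) (k n : nat) (M : 'M[bool]_(k, n)).

Lemma vdeg_le_det_colsub_V (s : {ffun 'I_k -> 'I_n}) i j :
  vdeg_le (mxvec_index i j) (j \in codom s) (\det (colsub s (V_mx F M))).
Proof.
apply: vdeg_le_sum => sg _; rewrite -[nat_of_bool _]add0n; apply: vdeg_leM.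
  by case: (odd_perm sg); rewrite ?expr1 ?expr0; [apply: vdeg_leN|]; exact: vdeg_le1.
(* In the term of [sg] only the entry in row [i] can be the variable of [(i, j)]. *)
pose c a := nat_of_bool (mxvec_index a (s (sg a)) == mxvec_index i j).
apply: (@vdeg_leW _ _ _ (\sum_(a < k) c a)%N); last first.
  apply: vdeg_le_prod => a _; rewrite !mxE.
  by case: (M a (s (sg a))); [exact: vdeg_leX|exact: vdeg_le0].
rewrite (bigD1 i) //= big1 ?addn0 => [|a ne_ai].
  rewrite /c; case: eqP => //= /mxvec_index_inj [_ <-].
  by rewrite lt0b codom_f.
by rewrite /c; case: eqP => // /mxvec_index_inj [eq_ai _]; rewrite eq_ai eqxx in ne_ai.
Qed.

Lemma vdeg_le_f_minors_V i j :
  vdeg_le (mxvec_index i j) 'C(n.-1, k.-1) (f_minors (V_mx F M)).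
Proof.
have := vdeg_le_prod (r := index_enum _) (P := @strict_incr k n)
  (fun s _ => @vdeg_le_det_colsub_V s i j).
apply: vdeg_leW; rewrite -big_mkcondr /= sum1_card.
by have := card_strict_incr_hit k j; rewrite cardsE.
Qed.

Lemma map_V_mx_support (G : 'M[F]_(k, n)) : support_mx G = M ->
  map_mx (meval (fun l => mxvec G 0 l)) (V_mx F M) = G.
Proof.
move=> <-; apply/matrixP => i j; rewrite !mxE.
by case: eqP => [->|_]; rewrite ?meval0 ?mevalXU ?mxvecE.
Qed.

End GenericMatrix.

Lemma hwt0 (F : fieldType) n : hwt (0 : 'rV[F]_n) = 0%N.
Proof. by apply/eqP; rewrite cards_eq0; apply/eqP/setP => j; rewrite !inE mxE eqxx. Qed.

Lemma hwt_le (F : fieldType) n (c : 'rV[F]_n) : (hwt c <= n)%N.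
Proof. by rewrite /hwt (leq_trans (max_card _)) ?card_ord. Qed.

Lemma card_zeros (F : fieldType) n (c : 'rV[F]_n) :
  #|[set j | c 0 j == 0]| = (n - hwt c)%N.
Proof.
rewrite /hwt -[X in (X - _)%N]card_ord -(cardsC [set j | c 0 j != 0]) addKn.
by apply: eq_card => j; rewrite !inE negbK.
Qed.

Section MinorsAndMDS.
Variables (F : finFieldType) (k n : nat).
Implicit Type G : 'M[F]_(k, n).

Lemma det_colsub_eq0 G (s : {ffun 'I_k -> 'I_n}) (v : 'rV[F]_k) :
  v != 0 -> (forall b, (v *m G) 0 (s b) = 0) -> \det (colsub s G) = 0.
Proof.
move=> nz_v vG0; apply/eqP/det0P; exists v => //.
apply/matrixP => a b; rewrite (ord1 a) mulmx_colsub !mxE.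
by have := vG0 b; rewrite mxE.
Qed.

Lemma MDS_det_colsub_neq0 G : is_MDS_generator G ->
  forall s, strict_incr s -> \det (colsub s G) != 0.
Proof.
move=> [rkG [_ min_wt]] s incr_s; apply/negP => /det0P [v nz_v vG].
have nz_vG : v *m G != 0 by rewrite mulmx_free_eq0 // /row_free rkG.
have {min_wt}: (n - k + 1 <= hwt (v *m G))%N := min_wt _ nz_vG.
have zeros_vG : [set x in codom s] \subset [set j | (v *m G) 0 j == 0].
  apply/subsetP => x /[!inE] /codomP [b ->].
  by have /matrixP/(_ 0 b) := vG; rewrite mulmx_colsub mxE [RHS]mxE => ->.
have := subset_leq_card zeros_vG.
rewrite cardsE card_codom ?card_ord ?card_zeros; last exact: strict_incr_inj.
have := hwt_le (v *m G); set w := hwt _; lia.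
Qed.

Hypothesis le_kn : (k <= n)%N.
Variable G : 'M[F]_(k, n).
Hypothesis det_neq0 : forall s, strict_incr s -> \det (colsub s G) != 0.

Lemma hwt_mul_ge (v : 'rV[F]_k) : v != 0 -> (n - k + 1 <= hwt (v *m G))%N.
Proof.
move=> nz_v; rewrite leqNgt; apply/negP => lt_wt.
have le_k_zeros : (k <= #|[set j | (v *m G) 0%R j == 0%R]|)%N.
  by rewrite card_zeros; move: lt_wt; set w := hwt _; lia.
have [s incr_s s_zero] := exists_strict_incr_sub le_k_zeros.
case/negP: (det_neq0 incr_s); apply/eqP/(det_colsub_eq0 nz_v) => b.
by have := s_zero b; rewrite inE => /eqP.
Qed.

Lemma rank_det_colsub : \rank G = k.
Proof.
have le_kT : (k <= #|[set: 'I_n]|)%N by rewrite cardsT card_ord.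
have [s incr_s _] := exists_strict_incr_sub le_kT.
apply/eqP; rewrite eqn_leq rank_leq_row /=.
have rk_s : \rank (colsub s G) = k.
  by apply: mxrank_unit; rewrite unitmxE unitfE det_neq0.
by have := mxrankM_maxl G (colsub s 1%:M); rewrite mulmx_colsub mulmx1 rk_s.
Qed.

End MinorsAndMDS.

Lemma MDS_of_det_colsub_neq0 (F : finFieldType) k n (M : 'M[bool]_(k, n))
    (G : 'M[F]_(k, n)) :
  (1 <= k)%N -> (k <= n)%N ->
  (forall i, #|[set j | M i j]| = (n - k + 1)%N) ->
  (forall i j, ~~ M i j -> G i j = 0) ->
  (forall s, strict_incr s -> \det (colsub s G) != 0) ->
  support_mx G = M /\ is_MDS_generator G.
Proof.
move=> le1k le_kn wt_M G_M det_neq0.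
have hwt_row i : hwt (row i G) = #|[set j | G i j != 0]|.
  by apply: eq_card => j; rewrite !inE mxE.
have wt_row i : (n - k + 1 <= hwt (row i G))%N.
  rewrite rowE; apply: hwt_mul_ge => //.
  by apply/eqP => /matrixP/(_ 0 i); rewrite !mxE !eqxx /= => /eqP; rewrite oner_eq0.
(* Each row of [G] lies in the support of the same row of [M] and is at least as heavy. *)
have supp_row i : [set j | G i j != 0] = [set j | M i j].
  apply/eqP; rewrite eqEcard wt_M -hwt_row wt_row andbT.
  by apply/subsetP => j; rewrite !inE; apply: contraR => /G_M ->; rewrite eqxx.
split.
  by apply/matrixP => i j; have /setP/(_ j) := supp_row i; rewrite !inE mxE.
split; first exact: rank_det_colsub.
split => [|u nz_uG]; last first.
  by apply: hwt_mul_ge => //; apply: contraNneq nz_uG => ->; rewrite mul0mx.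
pose i0 := Ordinal le1k; exists (delta_mx 0 i0); rewrite -rowE.
split; last by rewrite hwt_row supp_row wt_M.
by apply: (contraTneq _ (wt_row i0)) => ->; rewrite hwt0 addn1.
Qed.

Theorem lemma1 (F : finFieldType) (n k : nat) (M : 'M[bool]_(k, n)) :
  (1 <= k)%N -> (k <= n)%N ->
  ('C(n.-1, k.-1) < #|F|)%N ->
  (forall i : 'I_k, #|[set j : 'I_n | M i j]| = (n - k + 1)%N) ->
  ((exists G : 'M[F]_(k, n), support_mx G = M /\ is_MDS_generator G) <->
   f_minors (@V_mx F k n M) != 0).
Proof.
move=> le1k le_kn lt_binom_q wt_M; split.
  move=> [G [supp_G MDS_G]].
  have : f_minors G != 0 by apply/f_minors_neq0P; apply: MDS_det_colsub_neq0.
  rewrite -(map_V_mx_support supp_G) -rmorph_f_minors.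
  by apply: contra_neq => ->; rewrite rmorph0.
move=> nz_f.
have deg_f mo : mo \in msupp (f_minors (V_mx F M)) -> forall l, (mo l < #|F|)%N.
  move=> f_mo l; case: (mxvec_indexP l) => i j.
  exact: leq_ltn_trans (@vdeg_le_f_minors_V F k n M i j mo f_mo) lt_binom_q.
have [y nz_fy] := mpoly_nonvanishing nz_f deg_f.
exists (map_mx (meval y) (V_mx F M)).
apply: MDS_of_det_colsub_neq0 => // [i j /negPf M_ij|].
  by rewrite !mxE M_ij meval0.
by apply/f_minors_neq0P; rewrite -rmorph_f_minors.
Qed.
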